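(* Let $G$ be a finite simple graph with edge weight function $w$ and vertex weight function $w_1$, and let $u,v$ be distinct vertices of $G$. Writing $\eta=\eta_{(w,w_1)}$, $$\eta(G\setminus u,x)\,\eta(G\setminus v,x)-\eta(G,x)\,\eta(G\setminus uv,x)=\sum_{p\in P_{uv}(G)}\big(|w(p)|\,\eta(G\setminus p,x)\big)^2,$$ where $P_{uv}(G)$ is the set of all paths in $G$ with endpoints $u$ and $v$, $|w(p)|=\prod_{e\in E(p)}|w(e)|$, and $G\setminus p$ denotes $G$ with all vertices of $p$ deleted.
   Context: An edge weight function $w$ assigns a nonzero complex number to each edge; a vertex weight function $w_1$ assigns a real number (possibly $0$) to each vertex; subgraphs carry restricted weights; deleting vertices also deletes incident edges, and $G\setminus uv$ deletes both $u$ and $v$. For $A\subseteq E(G)$, $w(A)=\prod_{e\in A}w(e)$. $\mu_w(G,x)=\sum_{M}(-1)^{|M|}|w(M)|^2x^{n-2|M|}$ over all matchings $M$ (including empty). $\eta_{(w,w_1)}(G,x)=\sum_{S\subseteq V(G)}(-1)^{|V(G)\setminus S|}\big(\prod_{y\in V(G)\setminus S}w_1(y)\big)\mu_w(G[S],x)$ with $G[S]$ the induced subgraph; $\mu_w,\eta_{(w,w_1)}$ of the empty graph equal $1$. *)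

(* Graph: vertex type T : finType, adjacency e : rel T
   (assumed symmetric and irreflexive in the theorem). *)
From HB Require Import structures.
From mathcomp Require Import all_boot all_order all_algebra.
From mathcomp Require Import algC.
Set Implicit Arguments. Unset Strict Implicit. Unset Printing Implicit Defensive.
Import Order.TTheory GRing.Theory Num.Theory.
Local Open Scope ring_scope.

Section Eta.
Variables (T : finType) (e : rel T).

Definition gedges : {set {set T}} :=
  [set A : {set T} | [exists x, exists y, e x y && (A == [set x; y])]].

Definition is_matching (S : {set T}) (M : {set {set T}}) : bool :=
  [forall A in M, (A \in gedges) && (A \subset S)] &&
  [forall A in M, forall B in M, (A != B) ==> [disjoint A & B]].

Variables (w : {set T} -> algC) (w1 : T -> algC).

Definition mu_w (S : {set T}) : {poly algC} :=
  \sum_(M : {set {set T}} | is_matching S M)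
     ((-1) ^+ #|M| * \prod_(A in M) (`|w A| ^+ 2)) *: 'X^(#|S| - 2 * #|M|).

Definition etaw (S : {set T}) : {poly algC} :=
  \sum_(S' : {set T} | S' \subset S)
     ((-1) ^+ #|S :\: S'| * \prod_(y in S :\: S') w1 y) *: mu_w S'.

(* u :: t is a path in G from u to v (as a vertex sequence) *)
Definition is_uv_path (u v : T) (t : seq T) : bool :=
  [&& path e u t, uniq (u :: t) & last u t == v].

Definition path_absw (u : T) (t : seq T) : algC :=
  \prod_(ab <- zip (u :: t) t) `|w [set ab.1; ab.2]|.

Definition del_path (u : T) (t : seq T) : {set T} :=
  [set x | x \notin u :: t].

End Eta.

From HB Require Import structures.
From mathcomp Require Import all_boot all_order all_algebra.
From mathcomp Require Import algC.
From mathcomp Require Import zify ring.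
Set Implicit Arguments. Unset Strict Implicit. Unset Printing Implicit Defensive.
Import Order.TTheory GRing.Theory Num.Theory.
Local Open Scope ring_scope.

(* Both sides satisfy the same recursion in the vertex u.  Splitting the
   matchings of G[S] according to the partner of u gives
     mu(S) = x mu(S-u) - sum_k |w(uk)|^2 mu(S-u-k),
   and summing over the deleted vertices turns this into the same recursion
   for eta, with x replaced by x - w1(u).  A u-v path is an edge uk followed by
   a k-v path avoiding u, and the only v-v path is trivial.  Expanding eta(S)
   and eta(S-v) in the left-hand side thus leaves |w(uv)|^2 eta(S-u-v)^2 plus
   the sum over k of |w(uk)|^2 times the left-hand side for (S-u, k, v), and
   the theorem follows by induction on |S|. *)

Lemma setD1C (T : finType) (S : {set T}) a b : S :\ a :\ b = S :\ b :\ a.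
Proof. by rewrite !setDDl setUC. Qed.

Lemma all_setD1 (T : finType) (S : {set T}) u (s : seq T) :
  all (fun x => x \in S :\ u) s = (u \notin s) && all (fun x => x \in S) s.
Proof.
elim: s => //= x s ->; rewrite !inE negb_or [u == x]eq_sym.
by case: (x == u); case: (x \in S); case: (u \in s).
Qed.

Lemma big_tuple_cons (T : finType) (R : Type) (idx : R)
  (op : Monoid.com_law idx) n (P : pred (n.+1.-tuple T))
  (F : n.+1.-tuple T -> R) :
  \big[op/idx]_(t : n.+1.-tuple T | P t) F t =
  \big[op/idx]_(k : T) \big[op/idx]_(t : n.-tuple T | P [tuple of k :: t])
     F [tuple of k :: t].
Proof.
rewrite pair_big_dep /=.
rewrite (reindex (fun p : T * n.-tuple T => [tuple of p.1 :: p.2])) /=.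
  by apply: eq_bigl.
exists (fun t : n.+1.-tuple T => (thead t, [tuple of behead t])) => [[k t]|t] _ /=.
  by congr pair; apply: val_inj.
by rewrite [in RHS](tuple_eta t); apply: val_inj.
Qed.

Section Matchings.
Variables (T : finType) (e : rel T).
Hypotheses (e_sym : symmetric e) (e_irr : irreflexive e).

Lemma gedgesP (A : {set T}) :
  reflect (exists x y, e x y /\ A = [set x; y]) (A \in gedges e).
Proof.
rewrite inE; apply: (iffP existsP) => [[x /existsP [y /andP [H /eqP ->]]]|[x [y [H ->]]]].
  by exists x, y.
by exists x; apply/existsP; exists y; rewrite H eqxx.
Qed.

Lemma is_matchingP (S : {set T}) (M : {set {set T}}) : reflect
  ((forall A, A \in M -> (A \in gedges e) && (A \subset S)) /\
   (forall A B, A \in M -> B \in M -> A != B -> [disjoint A & B]))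
  (is_matching e S M).
Proof.
apply: (iffP andP) => [[/forall_inP H1 /forall_inP H2]|[H1 H2]]; split.
- exact: H1.
- by move=> A B /H2 /forall_inP H /H /implyP.
- by apply/forall_inP.
- apply/forall_inP => A /H2 H; apply/forall_inP => B /H H'; exact/implyP.
Qed.

Lemma edge_neq x y : e x y -> x != y.
Proof. by apply: contraTneq => ->; rewrite e_irr. Qed.

Lemma card_gedge (A : {set T}) : A \in gedges e -> #|A| = 2%N.
Proof. by case/gedgesP=> x [y [H ->]]; rewrite cards2 edge_neq. Qed.

Lemma gedges_set2 u k : ([set u; k] \in gedges e) = e u k.
Proof.
apply/idP/idP => [hE|euk]; last by apply/gedgesP; exists u, k.
have := card_gedge hE; rewrite cards2; case: eqP => // uk _.
case/gedgesP: hE => x [y [H E]].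
have /set2P[ux|uy] : u \in [set x; y] by rewrite -E set21.
  have /set2P[kx|->] : k \in [set x; y] by rewrite -E set22.
    by case: uk; rewrite ux kx.
  by rewrite ux.
have /set2P[->|ky] : k \in [set x; y] by rewrite -E set22.
  by rewrite uy e_sym.
by case: uk; rewrite uy ky.
Qed.

Lemma matching_card (S : {set T}) (M : {set {set T}}) :
  is_matching e S M -> (2 * #|M| <= #|S|)%N.
Proof.
case/is_matchingP => H1 H2.
have tM : trivIset M by apply/trivIsetP => A B hA hB; apply: H2.
have: cover M \subset S by apply/bigcupsP => A /H1 /andP[].
move/subset_leq_card; apply: leq_trans.
rewrite -(eqP tM) (eq_bigr (fun _ => 2%N)); last by move=> A /H1 /andP[/card_gedge].
by rewrite sum_nat_const mulnC.
Qed.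

Lemma matching_partner_uniq (S : {set T}) (M : {set {set T}}) u k k' :
  is_matching e S M -> [set u; k] \in M -> [set u; k'] \in M -> k = k'.
Proof.
case/is_matchingP => H1 H2 hk hk'.
case: (eqVneq [set u; k] [set u; k']) => E.
  have /set2P[ku|//] : k \in [set u; k'] by rewrite -E set22.
  by have /andP[] := H1 _ hk; rewrite gedges_set2 ku e_irr.
by have := H2 _ _ hk hk' E => /disjointFr /(_ (set21 u k)); rewrite set21.
Qed.

Definition unmatched u (M : {set {set T}}) := [forall k, [set u; k] \notin M].

Lemma is_matching_unmatched (S : {set T}) M u : u \in S ->
  (is_matching e S M && unmatched u M) = is_matching e (S :\ u) M.
Proof.
move=> uS; apply/idP/idP.
  case/andP => /is_matchingP [H1 H2] fr; apply/is_matchingP; split => // A hA.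
  have /andP[eA sA] := H1 _ hA; rewrite eA /=.
  apply/subsetP => x xA; rewrite !inE (subsetP sA x xA) andbT.
  apply/eqP => xu; subst x.
  case/gedgesP: eA => a [b [ab EA]]; move: xA hA; rewrite EA.
  case/set2P => ua hA.
    by move: (forallP fr b); rewrite ua hA.
  by move: (forallP fr a); rewrite ua setUC hA.
case/is_matchingP => H1 H2; apply/andP; split.
  apply/is_matchingP; split => // A /H1 /andP[-> sA] /=.
  by rewrite (subset_trans sA) ?subD1set.
apply/forallP => k; apply/negP => /H1 /andP[_ /subsetP /(_ u)].
by rewrite !inE eqxx /= => /(_ isT).
Qed.

Lemma is_matching_setU1 (S : {set T}) M u k : e u k -> u \in S -> k \in S ->
  is_matching e S ([set u; k] |: M) && ([set u; k] \notin M) =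
  is_matching e (S :\ u :\ k) M.
Proof.
move=> euk uS kS; set A := [set u; k].
have eA : A \in gedges e by rewrite gedges_set2.
have sAS : A \subset S by apply/subsetP => x /set2P[] ->.
apply/idP/idP.
  case/andP => /is_matchingP [H1 H2] nA; apply/is_matchingP; split.
    move=> B hB; have hB' : B \in A |: M by rewrite setU1r.
    have /andP[eB sB] := H1 _ hB'.
    have ne : A != B by apply: contraNneq nA => ->.
    have dj := H2 _ _ (setU11 A M) hB' ne.
    have uB : u \notin B by rewrite (disjointFr dj) // set21.
    have kB : k \notin B by rewrite (disjointFr dj) // set22.
    rewrite eB /=; apply/subsetP => x xB.
    by rewrite !inE (subsetP sB x xB) andbT (memPn uB) // (memPn kB).
  by move=> B C hB hC; apply: H2; apply: setU1r.
case/is_matchingP => H1 H2.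
have dA B : B \in M -> [disjoint A & B].
  move=> /H1 /andP[_ sB]; rewrite disjoint_subset; apply/subsetP => x.
  by case/set2P => -> ; apply/negP => /(subsetP sB); rewrite !inE eqxx ?andbF.
have nA : A \notin M.
  apply/negP => /H1 /andP[_ /subsetP /(_ u (set21 u k))].
  by rewrite !inE eqxx andbF.
rewrite nA andbT; apply/is_matchingP; split.
  move=> B /setU1P[->|hB]; first by rewrite eA sAS.
  have /andP[-> sB] := H1 _ hB.
  by rewrite (subset_trans sB) // (subset_trans (subD1set _ k)) ?subD1set.
move=> B C /setU1P[->|hB] /setU1P[->|hC].
- by rewrite eqxx.
- by move=> _; apply: dA.
- by move=> _; rewrite disjoint_sym; apply: dA.
- exact: H2.
Qed.

End Matchings.

Section MatchingRecursion.
Variables (T : finType) (e : rel T).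
Hypotheses (e_sym : symmetric e) (e_irr : irreflexive e).
Variable w : {set T} -> algC.

Definition wsq u k : algC := if e u k then `|w [set u; k]| ^+ 2 else 0.

Definition matching_term (S : {set T}) (M : {set {set T}}) : {poly algC} :=
  ((-1) ^+ #|M| * \prod_(A in M) (`|w A| ^+ 2)) *: 'X^(#|S| - 2 * #|M|).

Lemma mu_wE S : mu_w e w S = \sum_(M | is_matching e S M) matching_term S M.
Proof. by []. Qed.

Lemma matching_term_split (S : {set T}) M u : is_matching e S M ->
  matching_term S M = (if unmatched u M then matching_term S M else 0)
                      + \sum_(k | [set u; k] \in M) matching_term S M.
Proof.
move=> hM; case: (boolP (unmatched u M)) => fr.
  by rewrite big_pred0 ?addr0 // => k; apply/negbTE/(forallP fr k).
move/forallPn: fr => [k0 /negbNE Hk0].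
rewrite add0r (big_pred1 k0) // => k /=.
by apply/idP/eqP => [Hk|->//]; apply: matching_partner_uniq hM Hk Hk0.
Qed.

Lemma matching_term_setD1 (S : {set T}) M u : u \in S ->
  is_matching e (S :\ u) M -> matching_term S M = 'X * matching_term (S :\ u) M.
Proof.
move=> uS hM; rewrite /matching_term.
have := matching_card e_irr hM; have := cardsD1 u S; rewrite uS.
move: #|S :\ u| #|S| #|M| => n s m -> hle.
rewrite (_ : (1 + n - 2 * m = (n - 2 * m).+1)%N); last by lia.
by rewrite exprS -!mul_polyC mulrCA.
Qed.

Lemma sum_matchings_with_edge (S : {set T}) u k : u \in S ->
  \sum_(M | is_matching e S M && ([set u; k] \in M)) matching_term S M =
  if k \in S :\ u then - ((wsq u k)%:P * mu_w e w (S :\ u :\ k)) else 0.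
Proof.
move=> uS; rewrite /wsq; case: ifP => [kSu | kSu]; last first.
  apply: big_pred0 => M; apply/negP => /andP[/is_matchingP[H1 _] hA].
  have /andP[ek sA] := H1 _ hA; move: ek kSu; rewrite gedges_set2 // => ek.
  by rewrite !inE eq_sym (edge_neq e_irr ek) (subsetP sA) ?set22.
case: (boolP (e u k)) => euk; last first.
  rewrite mul0r oppr0; apply: big_pred0 => M; apply/negP => /andP[hM hA].
  by case/is_matchingP: hM => /(_ _ hA) /andP[]; rewrite gedges_set2 // (negbTE euk).
have kS : k \in S by case/setD1P: kSu.
set A := [set u; k].
rewrite (reindex_onto (fun M' => A |: M') (fun M => M :\ A)) /=; last first.
  by move=> M /andP[_ hA]; rewrite setD1K.
rewrite mu_wE big_distrr /= -sumrN.
apply: eq_big => M'.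
  rewrite setU11 andbT.
  have -> : ((A |: M') :\ A == M') = (A \notin M').
    by apply/eqP/idP => [<-|hn]; [rewrite setD11 | rewrite setU1K].
  exact: is_matching_setU1.
case/andP => _ /eqP E.
have nA : A \notin M' by rewrite -E setD11.
rewrite /matching_term cardsU1 nA big_setU1 //=.
have := cardsD1 u S; have := cardsD1 k (S :\ u); rewrite uS kSu.
move: #|S :\ u :\ k| #|S :\ u| #|S| #|M'| => n1 n2 s m -> ->.
rewrite (_ : (1 + (1 + n1) - 2 * (1 + m) = n1 - 2 * m)%N); last by lia.
rewrite -!mul_polyC exprD expr1 !polyCM polyCN; ring.
Qed.

Lemma mu_w_rec (S : {set T}) u : u \in S ->
  mu_w e w S = 'X * mu_w e w (S :\ u)
    - \sum_(k in S :\ u) (wsq u k)%:P * mu_w e w (S :\ u :\ k).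
Proof.
move=> uS.
rewrite mu_wE (eq_bigr _ (fun M hM => matching_term_split u hM)) big_split /=.
rewrite -big_mkcondr.
rewrite (eq_big (is_matching e (S :\ u)) (fun M => 'X * matching_term (S :\ u) M));
  first last.
- move=> M /andP[hM fr]; apply: matching_term_setD1 => //.
  by rewrite -is_matching_unmatched // hM.
- by move=> M; rewrite is_matching_unmatched.
rewrite -big_distrr /= -mu_wE; congr (_ + _).
rewrite (exchange_big_dep xpredT) //=.
under eq_bigr => k _ do rewrite sum_matchings_with_edge //.
rewrite -sumrN [RHS]big_mkcond /=; apply: eq_bigr => k _.
by case: (k \in S :\ u); rewrite ?oppr0.
Qed.

End MatchingRecursion.

Section EtaRecursion.
Variables (T : finType) (e : rel T).
Hypotheses (e_sym : symmetric e) (e_irr : irreflexive e).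
Variables (w : {set T} -> algC) (w1 : T -> algC).

Definition eta_coef (S S' : {set T}) : algC :=
  (-1) ^+ #|S :\: S'| * \prod_(y in S :\: S') w1 y.

Lemma etawE (S : {set T}) :
  etaw e w w1 S = \sum_(S' : {set T} | S' \subset S) eta_coef S S' *: mu_w e w S'.
Proof. by []. Qed.

Lemma sum_subsets_notin (S : {set T}) k (G : {set T} -> {poly algC}) : k \in S ->
  \sum_(S' : {set T} | (S' \subset S) && (k \notin S')) eta_coef S S' *: G S' =
  - (w1 k)%:P * \sum_(R : {set T} | R \subset S :\ k) eta_coef (S :\ k) R *: G R.
Proof.
move=> kS; rewrite big_distrr /=; apply: eq_big => [R|R /andP[sR kR]].
  by rewrite subsetD1.
rewrite /eta_coef; have -> : S :\: R = k |: ((S :\ k) :\: R).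
  by apply/setP => x; rewrite !inE; case: (eqVneq x k) => [->|] //=; rewrite kS kR.
have kn : k \notin (S :\ k) :\: R by rewrite !inE eqxx andbF.
rewrite cardsU1 big_setU1 //= kn -!mul_polyC exprD expr1 !polyCM polyCN.
ring.
Qed.

Lemma sum_subsets_in (S : {set T}) k (G : {set T} -> {poly algC}) : k \in S ->
  \sum_(S' : {set T} | (S' \subset S) && (k \in S')) eta_coef S S' *: G (S' :\ k) =
  \sum_(R : {set T} | R \subset S :\ k) eta_coef (S :\ k) R *: G R.
Proof.
move=> kS.
rewrite (reindex_onto (fun R => k |: R) (fun S' => S' :\ k)) /=; last first.
  by move=> S' /andP[_ kS']; rewrite setD1K.
apply: eq_big => R.
  rewrite setU11 andbT subUset sub1set kS /= subsetD1.
  case: (boolP (k \in R)) => kR; last by rewrite setU1K // eqxx.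
  have /negbTE -> : (k |: R) :\ k != R by apply: contraTneq kR => <-; rewrite setD11.
  by rewrite !andbF.
move=> /andP[_ /eqP E]; have kR : k \notin R by rewrite -E setD11.
by rewrite setU1K // /eta_coef setDDl.
Qed.

Lemma eta_sum_neighbours u (S : {set T}) :
  \sum_(R : {set T} | R \subset S)
     eta_coef S R *: \sum_(k in R) (wsq e w u k)%:P * mu_w e w (R :\ k) =
  \sum_(k in S) (wsq e w u k)%:P * etaw e w w1 (S :\ k).
Proof.
under eq_bigr do rewrite scaler_sumr.
rewrite (exchange_big_dep (mem S)) /=; last first.
  by move=> R k sR kR; apply: (subsetP sR k kR).
apply: eq_bigr => k kS.
rewrite (sum_subsets_in (fun R => (wsq e w u k)%:P * mu_w e w R)) //.
rewrite etawE big_distrr /=; apply: eq_bigr => R _.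
by rewrite -!mul_polyC mulrCA.
Qed.

Lemma etaw_rec (S : {set T}) u : u \in S ->
  etaw e w w1 S = ('X - (w1 u)%:P) * etaw e w w1 (S :\ u)
    - \sum_(k in S :\ u) (wsq e w u k)%:P * etaw e w w1 (S :\ u :\ k).
Proof.
move=> uS; rewrite etawE (bigID (fun S' : {set T} => u \in S')) /=.
rewrite sum_subsets_notin // -etawE.
rewrite (eq_bigr (fun S' => eta_coef S S' *: ('X * mu_w e w (S' :\ u)
    - \sum_(k in S' :\ u) (wsq e w u k)%:P * mu_w e w (S' :\ u :\ k)))); last first.
  by move=> S' /andP[_ uS']; rewrite -mu_w_rec.
rewrite (sum_subsets_in (fun R => 'X * mu_w e w R
    - \sum_(k in R) (wsq e w u k)%:P * mu_w e w (R :\ k))) //=.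
under eq_bigr do rewrite scalerBr.
rewrite sumrB eta_sum_neighbours.
have -> : \sum_(R : {set T} | R \subset S :\ u) eta_coef (S :\ u) R *: ('X * mu_w e w R)
    = 'X * etaw e w w1 (S :\ u).
  rewrite etawE big_distrr /=; apply: eq_bigr => R _.
  by rewrite -!mul_polyC mulrCA.
ring.
Qed.

End EtaRecursion.

Section PathSums.
Variables (T : finType) (e : rel T).
Hypotheses (e_sym : symmetric e) (e_irr : irreflexive e).
Variables (w : {set T} -> algC) (w1 : T -> algC).

Lemma is_uv_path_cons u v k t :
  is_uv_path e u v (k :: t) = [&& e u k, u \notin k :: t & is_uv_path e k v t].
Proof.
rewrite /is_uv_path /= -/(uniq (k :: t)).
by case: (e u k); case: (u \in k :: t); case: (path e k t).
Qed.

Lemma is_uv_path_loop v t : t != [::] -> is_uv_path e v v t = false.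
Proof.
case: t => [//|k t] _; apply/negP => /and3P[_ /andP[vn _] /eqP E].
by move: vn; rewrite -[X in X \notin _]E /= mem_last.
Qed.

Lemma path_absw_cons u k t :
  path_absw w u (k :: t) = `|w [set u; k]| * path_absw w k t.
Proof. by rewrite /path_absw /= big_cons. Qed.

Definition path_sum N (S : {set T}) u v : {poly algC} :=
  \sum_(n < N) \sum_(t : n.-tuple T | is_uv_path e u v t && all (fun x => x \in S) (u :: t))
     ((path_absw w u t)%:P * etaw e w w1 (S :&: del_path u t)) ^+ 2.

Lemma path_sum_diag N (S : {set T}) v : (0 < N)%N -> v \in S ->
  path_sum N S v v = etaw e w w1 (S :\ v) ^+ 2.
Proof.
case: N => // N _ vS; rewrite /path_sum big_ord_recl /=.
rewrite [X in _ + X]big1 ?addr0; last first.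
  by move=> i _; apply: big_pred0 => t; rewrite is_uv_path_loop // -size_eq0 size_tuple.
rewrite (big_pred1 [tuple]); last first.
  by move=> t; rewrite (tuple0 t) /is_uv_path /= vS eqxx.
rewrite /path_absw big_nil mul1r; congr (etaw _ _ _ _ ^+ 2).
by apply/setP => x; rewrite !inE andbC.
Qed.

Lemma is_uv_path_cons_in (S : {set T}) u v k t :
  is_uv_path e u v (k :: t) && all (fun x => x \in S) [:: u, k & t] =
  [&& u \in S, e u k & is_uv_path e k v t && all (fun x => x \in S :\ u) (k :: t)].
Proof.
rewrite is_uv_path_cons all_setD1 /=.
by case: (e u k); case: (u \in S); case: (u \in k :: t); case: (is_uv_path e k v t).
Qed.

Lemma path_sum_rec N (S : {set T}) u v : u != v -> u \in S ->
  path_sum N.+1 S u v =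
  \sum_(k in S :\ u) (wsq e w u k)%:P * path_sum N (S :\ u) k v.
Proof.
move=> huv uS; rewrite /path_sum big_ord_recl big_pred0 ?add0r; last first.
  by move=> t; rewrite (tuple0 t) /is_uv_path /= (negbTE huv).
under [RHS]eq_bigr do rewrite big_distrr.
rewrite [RHS]exchange_big /=; apply: eq_bigr => n _.
rewrite big_tuple_cons [RHS]big_mkcond; apply: eq_bigr => k _ /=.
under eq_bigl do rewrite is_uv_path_cons_in uS.
case: (boolP (e u k)) => euk; last first.
  by rewrite big_pred0 // /wsq (negbTE euk) mul0r; case: ifP.
case: ifP => kSu; last by rewrite big_pred0 // => t; rewrite /= kSu andbF.
rewrite big_distrr; apply: eq_bigr => t _.
have -> : S :&: del_path u (k :: t) = (S :\ u) :&: del_path k t.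
  by apply/setP => x; rewrite !inE !negb_or; case: (x == u); case: (x \in S).
by rewrite path_absw_cons /wsq euk polyCM polyC_exp -mulrA exprMn.
Qed.

Definition eta_minor (S : {set T}) u v : {poly algC} :=
  etaw e w w1 (S :\ u) * etaw e w w1 (S :\ v)
  - etaw e w w1 S * etaw e w w1 (S :\ u :\ v).

Lemma eta_minor_rec (S : {set T}) u v : u \in S -> v \in S :\ u ->
  eta_minor S u v = (wsq e w u v)%:P * etaw e w w1 (S :\ u :\ v) ^+ 2
    + \sum_(k in S :\ u | k != v) (wsq e w u k)%:P * eta_minor (S :\ u) k v.
Proof.
move=> uS vSu; have uSv : u \in S :\ v by rewrite in_setD1 uS andbT eq_sym; case/setD1P: vSu.
rewrite /eta_minor (etaw_rec e_sym e_irr w w1 uS) (etaw_rec e_sym e_irr w w1 uSv).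
rewrite [S :\ v :\ u]setD1C [in LHS](bigD1 v vSu).
have -> : \sum_(k in S :\ u :\ v) (wsq e w u k)%:P * etaw e w w1 (S :\ u :\ v :\ k) =
    \sum_(k in S :\ u | k != v) (wsq e w u k)%:P * etaw e w w1 (S :\ u :\ k :\ v).
  by apply: eq_big => [k|k _]; rewrite ?in_setD1 1?andbC // setD1C.
set E := etaw e w w1 (S :\ u); set Ev := etaw e w w1 (S :\ u :\ v).
rewrite [in RHS](eq_bigr (fun k => (wsq e w u k)%:P * etaw e w w1 (S :\ u :\ k) * Ev
   - E * ((wsq e w u k)%:P * etaw e w w1 (S :\ u :\ k :\ v)))); last first.
  by move=> k _; rewrite /eta_minor -/E -/Ev; ring.
rewrite sumrB -big_distrl -big_distrr /=; ring.
Qed.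

Lemma eta_minor_path_sum N (S : {set T}) u v :
  u \in S -> v \in S -> u != v -> (#|S| <= N)%N ->
  eta_minor S u v = path_sum N S u v.
Proof.
elim: N S u => [|N IH] S u uS vS huv hN.
  by move: hN; rewrite leqn0 => /eqP/cards0_eq S0; rewrite S0 inE in uS.
have vSu : v \in S :\ u by rewrite !inE eq_sym huv vS.
have cS := cardsD1 u S; have cSu := cardsD1 v (S :\ u); rewrite uS vSu in cS cSu.
rewrite eta_minor_rec // path_sum_rec // (bigD1 v vSu) /= path_sum_diag //; last by lia.
by congr (_ + _); apply: eq_bigr => k /andP[kSu kv]; rewrite IH //; lia.
Qed.

End PathSums.

Theorem lemma4p5 (T : finType) (e : rel T)
  (e_sym : symmetric e) (e_irr : irreflexive e)
  (w : {set T} -> algC) (w1 : T -> algC)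
  (w_nz : forall A, A \in gedges e -> w A != 0)
  (w1_real : forall y, w1 y \is Num.real)
  (u v : T) (huv : u != v) :
  etaw e w w1 ([set: T] :\ u) * etaw e w w1 ([set: T] :\ v)
  - etaw e w w1 [set: T] * etaw e w w1 ([set: T] :\ u :\ v)
  = \sum_(n < #|T|) \sum_(t : n.-tuple T | is_uv_path e u v t)
      ((path_absw w u t)%:P * etaw e w w1 (del_path u t)) ^+ 2.
Proof.
transitivity (path_sum e w w1 #|T| [set: T] u v).
  by apply: eta_minor_path_sum; rewrite ?inE ?max_card.
apply: eq_bigr => n _; apply: eq_big => [t|t _]; last by rewrite setTI.
by rewrite (_ : all _ _ = true) ?andbT //; apply/allP => x _; apply: in_setT.
Qed.
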